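(* Let $\mathcal F\subseteq\mathcal G$ be lattice filters of an MV-algebra $\mathcal L$, and let $Q$ be an implication filter with $Q\subseteq\mathcal K(\mathcal G)$. Then $$(\mathcal F\sqsubseteq\!\!\to\mathcal G)/Q=(\mathcal F/Q)\sqsubseteq\!\!\to(\mathcal G/Q),$$ where the right-hand side is computed in the MV-algebra $\mathcal L/Q$.
   Context: $\mathcal L=(L,\oplus,\lnot,0)$ is an MV-algebra. We write $1=\lnot0$, $x\otimes y=\lnot(\lnot x\oplus\lnot y)$, and $x\to y=\lnot x\oplus y$, and use the usual lattice order. A lattice filter is a nonempty upward-closed subset closed under $\wedge$. An implication filter is a set $Q\ni1$ closed under modus ponens. $\mathcal L/Q$ is the quotient by $x\sim_Q y\iff x\to y,\ y\to x\in Q$, and $X/Q=\{[x]_Q : x\in X\}$. For an upward-closed $\mathcal F$ (in any MV-algebra) and $a$, let $\mathcal F_a=\{z: z\to a\notin\mathcal F\}$, and let $\mathcal K(\mathcal F)=\{z:\forall a\notin\mathcal F,\ z\to a\notin\mathcal F\}$. For $\mathcal F\subseteq\mathcal G$ we put $\mathcal F\sqsubseteq\!\!\to\mathcal G=\bigcap_{a\notin\mathcal G}\mathcal F_a$. *)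

From Stdlib Require Import ClassicalEpsilon.
Set Implicit Arguments.

Record MVAlgebra := {
  mv_car :> Type;
  mv_oplus : mv_car -> mv_car -> mv_car;
  mv_neg : mv_car -> mv_car;
  mv_zero : mv_car;
  mv_assoc : forall x y z, mv_oplus x (mv_oplus y z) = mv_oplus (mv_oplus x y) z;
  mv_comm : forall x y, mv_oplus x y = mv_oplus y x;
  mv_zero_r : forall x, mv_oplus x mv_zero = x;
  mv_negneg : forall x, mv_neg (mv_neg x) = x;
  mv_one_abs : forall x, mv_oplus x (mv_neg mv_zero) = mv_neg mv_zero;
  mv_luk : forall x y, mv_oplus (mv_neg (mv_oplus (mv_neg x) y)) y
                     = mv_oplus (mv_neg (mv_oplus (mv_neg y) x)) x
}.

Section MV.
Variable L : MVAlgebra.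
Definition mv_one : L := mv_neg L (mv_zero L).
Definition mv_otimes (x y : L) : L :=
  mv_neg L (mv_oplus L (mv_neg L x) (mv_neg L y)).
Definition mv_imp (x y : L) : L := mv_oplus L (mv_neg L x) y.
Definition mv_le (x y : L) : Prop := mv_imp x y = mv_one.
Definition mv_meet (x y : L) : L := mv_otimes x (mv_imp x y).

Definition upward_closed (F : L -> Prop) : Prop :=
  forall x y, F x -> mv_le x y -> F y.
Definition lattice_filter (F : L -> Prop) : Prop :=
  (exists x, F x) /\ upward_closed F /\ (forall x y, F x -> F y -> F (mv_meet x y)).
Definition implication_filter (Q : L -> Prop) : Prop :=
  Q mv_one /\ (forall x y, Q x -> Q (mv_imp x y) -> Q y).

Definition simQ (Q : L -> Prop) (x y : L) : Prop := Q (mv_imp x y) /\ Q (mv_imp y x).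
Definition cls (Q : L -> Prop) (x : L) : L -> Prop := fun y => simQ Q x y.

(* Elements of L/Q: subsets of L that are classes [x]_Q. *)
Record QClass (Q : L -> Prop) := {
  qc_set : L -> Prop;
  qc_rep : exists x, qc_set = cls Q x
}.

Definition qclass_of (Q : L -> Prop) (x : L) : QClass Q :=
  {| qc_set := cls Q x; qc_rep := ex_intro _ x eq_refl |}.

Definition rep (Q : L -> Prop) (C : QClass Q) : L :=
  proj1_sig (constructive_indefinite_description _ (qc_rep C)).

Definition qimp (Q : L -> Prop) (C D : QClass Q) : QClass Q :=
  qclass_of Q (mv_imp (rep C) (rep D)).

Definition quot_set (Q : L -> Prop) (X : L -> Prop) : QClass Q -> Prop :=
  fun C => exists x, X x /\ qc_set C = cls Q x.
End MV.

(* Generic notions, stated for any carrier with an implication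
   (they only use ->; applied both in L and in L/Q). *)
Section Generic.
Variables (T : Type) (imp : T -> T -> T).
Definition F_sub (F : T -> Prop) (a : T) : T -> Prop := fun z => ~ F (imp z a).
Definition Kset (F : T -> Prop) : T -> Prop :=
  fun z => forall a, ~ F a -> ~ F (imp z a).
Definition sqimp (F G : T -> Prop) : T -> Prop :=
  fun z => forall a, ~ G a -> F_sub F a z.
End Generic.

(* Write x ~> y for x → y and [x] for the Q-class of x.  The proof rests on
   three facts.
   (1) ~_Q is a congruence for →, so [x] → [a] = [x → a] in L/Q (qimp_set).
   (2) If Q ⊆ K(G) and G is upward closed, then G is a union of Q-classes
       (saturated_of_K): from q ∈ Q, g ∈ G and q = g → y we get
       g ≤ (g → y) → y, hence if y ∉ G then q ∈ K(G) forces g ∉ G.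
   (3) If x ∈ F ⊑→ G and r ∉ G, then no f ∈ F is Q-equivalent to x → r
       (sqimp_avoids_class): with q = f → (x → r) ∈ Q, the element
       a = q → r is Q-equivalent to r, so a ∉ G by (2), while f ≤ x → a,
       so x → a ∈ F, contradicting x ∈ F_a.
   Inclusion ⊆ of the theorem is (3) read through (1); inclusion ⊇ takes the
   representative x of a class C and, for a ∉ G with x → a ∈ F, tests the
   hypothesis on C against [a], which lies outside G/Q by (2). *)
From Stdlib Require Import Classical ClassicalEpsilon FunctionalExtensionality PropExtensionality.
Set Implicit Arguments.
Unset Strict Implicit.

Local Notation "x +' y" := (mv_oplus _ x y) (at level 50, left associativity).
Local Notation "!' x" := (mv_neg _ x) (at level 35, right associativity).
Local Notation "x ~> y" := (mv_imp _ x y) (at level 55, right associativity).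

Section MVIdentities.
Variable L : MVAlgebra.

Lemma zero_l (x : L) : mv_zero L +' x = x.
Proof. rewrite mv_comm. apply mv_zero_r. Qed.

(* x → x = 1, obtained from the Łukasiewicz axiom with y = 1. *)
Lemma imp_refl (x : L) : x ~> x = mv_one L.
Proof.
  pose proof (mv_luk L x (mv_one L)) as H.
  unfold mv_one in *. rewrite mv_one_abs, mv_negneg, zero_l in H.
  symmetry; exact H.
Qed.

Lemma imp_one (x : L) : x ~> mv_one L = mv_one L.
Proof. apply mv_one_abs. Qed.

Lemma imp_exch (a b c : L) : a ~> b ~> c = b ~> a ~> c.
Proof. unfold mv_imp. rewrite !mv_assoc, (mv_comm L (!' a)). reflexivity. Qed.

Lemma imp_K (g y : L) : g ~> (g ~> y) ~> y = mv_one L.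
Proof. rewrite imp_exch. apply imp_refl. Qed.

Lemma imp_trans_one (x y z : L) : (x ~> y) ~> (y ~> z) ~> x ~> z = mv_one L.
Proof.
  unfold mv_imp.
  rewrite (mv_comm L (!' x) z), (mv_assoc L (!' (!' y +' z)) z), mv_luk.
  rewrite <- (mv_assoc L (!' (!' z +' y)) y (!' x)), (mv_comm L y (!' x)).
  rewrite (mv_comm L (!' (!' z +' y))), mv_assoc, (mv_comm L _ (!' x +' y)).
  pose proof (imp_refl (!' x +' y)) as Hu. unfold mv_imp in Hu.
  rewrite (mv_comm L (!' x +' y)), Hu, mv_comm. apply mv_one_abs.
Qed.
End MVIdentities.

Section ImplicationFilter.
Variables (L : MVAlgebra) (Q : L -> Prop).
Hypothesis hQ : implication_filter L Q.

Lemma Q_one : Q (mv_one L).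
Proof. apply hQ. Qed.

Lemma Q_mp (x y : L) : Q x -> Q (x ~> y) -> Q y.
Proof. apply hQ. Qed.

Lemma Q_up (x y : L) : Q x -> x ~> y = mv_one L -> Q y.
Proof. intros Hx Hle. apply (Q_mp Hx). rewrite Hle. apply Q_one. Qed.

Lemma Q_trans (x y z : L) : Q (x ~> y) -> Q (y ~> z) -> Q (x ~> z).
Proof.
  intros Hxy Hyz. apply (Q_mp Hyz). apply (Q_mp Hxy).
  rewrite imp_trans_one. apply Q_one.
Qed.

Lemma sim_refl (x : L) : simQ L Q x x.
Proof. split; rewrite imp_refl; apply Q_one. Qed.

Lemma sim_sym (x y : L) : simQ L Q x y -> simQ L Q y x.
Proof. intros [Hxy Hyx]; split; assumption. Qed.

Lemma sim_trans (x y z : L) : simQ L Q x y -> simQ L Q y z -> simQ L Q x z.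
Proof. intros [Hxy Hyx] [Hyz Hzy]; split; eapply Q_trans; eassumption. Qed.

Lemma sim_imp_l (x x' r : L) : simQ L Q x x' -> simQ L Q (x ~> r) (x' ~> r).
Proof.
  intros [Hxx' Hx'x]; split.
  - apply (Q_mp Hx'x). rewrite imp_trans_one. apply Q_one.
  - apply (Q_mp Hxx'). rewrite imp_trans_one. apply Q_one.
Qed.

Lemma sim_imp_r (x r r' : L) : simQ L Q r r' -> simQ L Q (x ~> r) (x ~> r').
Proof.
  intros [Hrr' Hr'r]; split.
  - apply (Q_mp Hrr'). rewrite imp_exch, imp_trans_one. apply Q_one.
  - apply (Q_mp Hr'r). rewrite imp_exch, imp_trans_one. apply Q_one.
Qed.

Lemma sim_imp_of_Q (q r : L) : Q q -> simQ L Q (q ~> r) r.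
Proof.
  intros Hq; split.
  - apply (Q_up Hq). apply imp_K.
  - rewrite imp_exch, imp_refl, imp_one. apply Q_one.
Qed.

Lemma cls_eq (x y : L) : simQ L Q x y -> cls L Q x = cls L Q y.
Proof.
  intros Hxy. apply functional_extensionality; intro z.
  apply propositional_extensionality. unfold cls. split; intro Hz.
  - exact (sim_trans (sim_sym Hxy) Hz).
  - exact (sim_trans Hxy Hz).
Qed.

Lemma cls_sim (x y : L) : cls L Q x = cls L Q y -> simQ L Q x y.
Proof. intros Heq. change (cls L Q x y). rewrite Heq. apply sim_refl. Qed.

Lemma rep_spec (C : QClass L Q) : qc_set C = cls L Q (rep C).
Proof.
  unfold rep. destruct constructive_indefinite_description as [x Hx]. exact Hx.
Qed.

Lemma qimp_set (C A : QClass L Q) (x a : L) :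
  qc_set C = cls L Q x -> qc_set A = cls L Q a ->
  qc_set (qimp C A) = cls L Q (x ~> a).
Proof.
  intros HC HA. simpl. apply cls_eq.
  assert (Hx : simQ L Q (rep C) x) by (apply cls_sim; rewrite <- rep_spec; exact HC).
  assert (Ha : simQ L Q (rep A) a) by (apply cls_sim; rewrite <- rep_spec; exact HA).
  exact (sim_trans (sim_imp_l _ Hx) (sim_imp_r _ Ha)).
Qed.
End ImplicationFilter.

Section Saturation.
Variables (L : MVAlgebra) (G Q : L -> Prop).
Hypothesis hGup : upward_closed L G.
Hypothesis hQK : forall x, Q x -> Kset (mv_imp L) G x.

Lemma saturated_of_K (g y : L) : G g -> simQ L Q g y -> G y.
Proof.
  intros Hg [Hgy _]. apply NNPP. intro Hy.
  apply (hQK Hgy Hy). apply (hGup Hg). apply imp_K.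
Qed.

Lemma quot_set_of_saturated (hQ : implication_filter L Q) (a : L) :
  quot_set G (qclass_of L Q a) -> G a.
Proof.
  intros [g [Hg Heq]]. apply (saturated_of_K Hg).
  apply (cls_sim hQ). symmetry. exact Heq.
Qed.

Lemma sqimp_avoids_class (F : L -> Prop) (hFup : upward_closed L F)
  (hQ : implication_filter L Q) (x r f : L) :
  sqimp (mv_imp L) F G x -> ~ G r -> simQ L Q f (x ~> r) -> ~ F f.
Proof.
  intros Hx Hr [Hq _] Hf.
  set (q := f ~> x ~> r) in Hq.
  assert (Ha : ~ G (q ~> r)).
  { intro Ha. exact (Hr (saturated_of_K Ha (sim_imp_of_Q hQ _ Hq))). }
  apply (Hx _ Ha). apply (hFup f); [exact Hf |].
  unfold mv_le. rewrite (imp_exch x q), imp_exch. apply imp_refl.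
Qed.
End Saturation.

Theorem mainTheorem10 (L : MVAlgebra) (F G Q : L -> Prop)
  (hF : lattice_filter L F) (hG : lattice_filter L G) (hFG : forall x, F x -> G x)
  (hQ : implication_filter L Q) (hQK : forall x, Q x -> Kset (mv_imp L) G x) :
  forall C : QClass L Q,
    quot_set (Q := Q) (sqimp (mv_imp L) F G) C <->
    sqimp (@qimp L Q) (quot_set (Q := Q) F) (quot_set (Q := Q) G) C.
Proof.
  destruct hF as [_ [hFup _]]. destruct hG as [_ [hGup _]].
  intros C. split.
  - intros [x [Hx HC]] A HnA [f [Hf Hfe]].
    assert (Hr : ~ G (rep A)).
    { intro Hr. apply HnA. exists (rep A). split; [exact Hr | apply rep_spec]. }
    assert (Hsim : simQ L Q f (x ~> rep A)).
    { apply (cls_sim hQ). rewrite <- Hfe. apply (qimp_set hQ HC (rep_spec A)). }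
    exact (sqimp_avoids_class hGup hQK hFup hQ Hx Hr Hsim Hf).
  - intros H. exists (rep C). split; [| apply rep_spec].
    intros a Hna HFa. apply (H (qclass_of L Q a)).
    + intro HGa. exact (Hna (quot_set_of_saturated hGup hQK hQ HGa)).
    + exists (rep C ~> a). split; [exact HFa |].
      apply (qimp_set hQ (rep_spec C)). reflexivity.
Qed.
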